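(* Let $\alpha$ be irrational with convergents $p_k/q_k$. For integers $k \ge 1$ and $0 \le M <q_k$ define \[ B_{k,M}(x)= \log \frac{P_M (\alpha, (-1)^k x/q_k)}{P_M (p_k/q_k, (-1)^k x/q_k)} - \sum_{n=1}^M \sin (\pi n \| q_k \alpha \| /q_k ) \cot \left( \pi \frac{n (-1)^k p_k+x}{q_k} \right) . \] Then \[ \log P_{q_k}(\alpha, (-1)^k x/q_k) = \log \left( |2 \sin (\pi (\| q_k \alpha \| + x/q_k))| \frac{|\sin (\pi x)|}{|\sin (\pi x/q_k)|} \right) + V_k (x) + B_{k,q_k-1}(x) , \] with the convention $|\sin (\pi x)| / |\sin (\pi x /q_k)| =q_k$ when $x/q_k \in \mathbb{Z}$.
   Context: $P_N(\beta,x)=\prod_{n=1}^N|2\sin(\pi(n\beta+x))|$. $p_k/q_k=[a_0;a_1,\dots,a_k]$ are the convergents of $\alpha=[a_0;a_1,\dots]$; $\|y\|$ is distance to nearest integer. $V_k(x)=\sum_{n=1}^{q_k-1} \sin (\pi n \| q_k \alpha \| /q_k) \cot \left( \pi \frac{n(-1)^k p_k+x}{q_k} \right)$. *)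

From Stdlib Require Import Reals ZArith ClassicalEpsilon.
Open Scope R_scope.

Fixpoint sum1 (N : nat) (f : nat -> R) : R :=
  match N with O => 0 | S m => sum1 m f + f (S m) end.
Fixpoint prod1 (N : nat) (f : nat -> R) : R :=
  match N with O => 1 | S m => prod1 m f * f (S m) end.

Definition P (N : nat) (beta x : R) : R :=
  prod1 N (fun n => Rabs (2 * sin (PI * (INR n * beta + x)))).

Definition cot (t : R) : R := cos t / sin t.

Definition dnint (y : R) : R := Rmin (frac_part y) (1 - frac_part y).

Definition irrational (a : R) : Prop :=
  forall m n : Z, n <> 0%Z -> a <> IZR m / IZR n.

(* regular continued fraction: complete quotients alpha_n and digits a_n *)
Fixpoint cf_rem (a : R) (n : nat) : R :=
  match n with O => a | S m => / frac_part (cf_rem a m) end.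
Definition cf_digit (a : R) (n : nat) : Z := Int_part (cf_rem a n).

(* ((p_n, q_n), (p_{n-1}, q_{n-1})), with p_{-1} = 1, q_{-1} = 0 *)
Fixpoint cf_pq (a : R) (n : nat) : (Z * Z) * (Z * Z) :=
  match n with
  | O => ((cf_digit a 0, 1%Z), (1%Z, 0%Z))
  | S m =>
      let '((p, q), (p', q')) := cf_pq a m in
      let d := cf_digit a (S m) in
      (((d * p + p')%Z, (d * q + q')%Z), (p, q))
  end.
Definition cf_p (a : R) (k : nat) : Z := fst (fst (cf_pq a k)).
Definition cf_q (a : R) (k : nat) : Z := snd (fst (cf_pq a k)).

Definition V (a : R) (k : nat) (x : R) : R :=
  let q := cf_q a k in let p := cf_p a k in
  sum1 (Z.to_nat q - 1)
    (fun n => sin (PI * INR n * dnint (IZR q * a) / IZR q)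
              * cot (PI * (INR n * (-1) ^ k * IZR p + x) / IZR q)).

Definition B (a : R) (k M : nat) (x : R) : R :=
  let q := cf_q a k in let p := cf_p a k in
  let y := (-1) ^ k * x / IZR q in
  ln (P M a y / P M (IZR p / IZR q) y)
  - sum1 M (fun n => sin (PI * INR n * dnint (IZR q * a) / IZR q)
                     * cot (PI * (INR n * (-1) ^ k * IZR p + x) / IZR q)).

Definition sin_ratio (q x : R) : R :=
  match excluded_middle_informative (exists z : Z, x / q = IZR z) with
  | left _ => q
  | right _ => Rabs (sin (PI * x)) / Rabs (sin (PI * x / q))
  end.

(* Write y = (-1)^k x/q_k.  Since V_k is the cotangent sum of B_{k,q_k-1}, the
   sum V_k + B_{k,q_k-1} is log (P_{q_k-1}(alpha, y) / P_{q_k-1}(p_k/q_k, y)), so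
   two factors remain to be identified.
   - The last factor of P_{q_k}(alpha, y): the convergent recurrences give
     q_k alpha - p_k = (-1)^k / (q_k alpha_{k+1} + q_{k-1}), of modulus < 1/2 when
     k >= 1, hence q_k alpha = p_k + (-1)^k ||q_k alpha|| and
     |2 sin (pi (q_k alpha + y))| = |2 sin (pi (||q_k alpha|| + x/q_k))|.
   - P_{q_k-1}(p_k/q_k, y): as p_k and q_k are coprime, z = e^(-2 pi i p_k/q_k) is a
     primitive q_k-th root of unity, so with w = e^(2 pi i y) the product equals
     prod_(0 < j < q_k) |w - z^j| = |1 + w + ... + w^(q_k - 1)|, which is q_k if
     w = 1 and |sin (pi x)| / |sin (pi x/q_k)| otherwise. *)

From Stdlib Require Import Reals Lra Lia ZArith Znumtheory ClassicalEpsilon.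
From Corelib Require Import ssreflect.
From mathcomp Require all_boot all_algebra complex Rstruct.

Open Scope R_scope.

Lemma pow_m1_cases k : (-1) ^ k = 1 \/ (-1) ^ k = -1.
Proof. by elim: k => [|k [IH | IH]] /=; [left | right | left]; rewrite ?IH; lra. Qed.

Lemma sin_sign k u : sin ((-1) ^ k * u) = (-1) ^ k * sin u.
Proof.
by case: (pow_m1_cases k) => ->; rewrite ?Rmult_1_l // -!Ropp_mult_distr_l !Rmult_1_l sin_neg.
Qed.

Lemma Rabs_sin_sign k u : Rabs (sin ((-1) ^ k * u)) = Rabs (sin u).
Proof. by rewrite sin_sign Rabs_mult pow_1_abs Rmult_1_l. Qed.

Lemma Rabs_sin_add_IZR_PI (m : Z) u : Rabs (sin (IZR m * PI + u)) = Rabs (sin u).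
Proof.
have sin_mPI : sin (IZR m * PI) = 0 by apply: sin_eq_0_1; exists m.
have cos_mPI : Rabs (cos (IZR m * PI)) = 1.
  by rewrite Rtrigo_facts.cos_sin_Rabs sin_mPI Rsqr_0 Rminus_0_r sqrt_1.
by rewrite sin_plus sin_mPI Rmult_0_l Rplus_0_l Rabs_mult cos_mPI Rmult_1_l.
Qed.

Lemma sin_PI_mul_eq0 r : sin (PI * r) = 0 <-> exists m : Z, r = IZR m.
Proof.
split=> [/sin_eq_0_0 [m Hm] | [m ->]]; last by apply: sin_eq_0_1; exists m; ring.
exists m; apply: (Rmult_eq_reg_l PI); [rewrite Hm; ring | exact: PI_neq0].
Qed.

Lemma sin_PI_rational_eq0 (n Q : nat) (p : Z) :
  (0 < n <= Q)%nat -> rel_prime p (Z.of_nat Q) ->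
  sin (PI * (INR n * IZR p / INR Q)) = 0 <-> n = Q.
Proof.
move=> [n_gt0 n_leQ] coprime_pQ.
have Q_neq0 : INR Q <> 0 by apply: not_0_INR; lia.
rewrite sin_PI_mul_eq0; split=> [[m Hm] | ->]; last by exists p; field.
have Q_dvd_np : Z.divide (Z.of_nat Q) (p * Z.of_nat n).
  by exists m; apply: eq_IZR; rewrite !mult_IZR -!INR_IZR_INZ -Hm; field.
have Q_dvd_n := Gauss _ _ _ Q_dvd_np (rel_prime_sym _ _ coprime_pQ).
have := Z.divide_pos_le _ _ _ Q_dvd_n; lia.
Qed.

Lemma sin_ratio_opp q x : sin_ratio q (- x) = sin_ratio q x.
Proof.
have int_opp : forall y, (exists z : Z, - y / q = IZR z) -> exists z : Z, y / q = IZR z.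
  by move=> y [z Hz]; exists (- z)%Z; rewrite opp_IZR -Hz /Rdiv; ring.
rewrite /sin_ratio.
case: (excluded_middle_informative (exists z : Z, - x / q = IZR z)) => [int_x' | not_int_x'];
  case: (excluded_middle_informative (exists z : Z, x / q = IZR z)) => [int_x | not_int_x] //.
- by exfalso; apply: not_int_x; apply: int_opp.
- by exfalso; apply: not_int_x'; apply: int_opp; rewrite Ropp_involutive.
- rewrite !(Rmult_comm PI) Ropp_mult_distr_l_reverse /Rdiv Ropp_mult_distr_l_reverse.
  by rewrite !sin_neg !Rabs_Ropp.
Qed.

Lemma Rabs_2sin_pos u : sin u <> 0 -> 0 < Rabs (2 * sin u).
Proof.
by move=> sin_neq0; apply: Rabs_pos_lt; apply: Rmult_integral_contrapositive_currified; lra.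
Qed.

Lemma P_S N b y : P (S N) b y = P N b y * Rabs (2 * sin (PI * (INR (S N) * b + y))).
Proof. by []. Qed.

Lemma P_pos N b y :
  (forall n, (1 <= n <= N)%nat -> sin (PI * (INR n * b + y)) <> 0) -> 0 < P N b y.
Proof.
rewrite /P; elim: N => [|N IH] sin_neq0 /=; first lra.
apply: Rmult_lt_0_compat; first by apply: IH => n Hn; apply: sin_neq0; lia.
by apply: Rabs_2sin_pos; apply: (sin_neq0 (S N)); lia.
Qed.

Module RootsOfUnity.
Import all_boot all_algebra complex Rstruct.
Import GRing.Theory Num.Theory.
(* [%R] is taken by Stdlib's [R_scope]. *)
Delimit Scope ring_scope with ring.

Section PrimitiveRootFactorization.
Local Open Scope ring_scope.

Lemma sum_expr_prod_sub_roots (F : fieldType) (n : nat) (z w : F) :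
  n.-primitive_root z -> \sum_(i < n) w ^+ i = \prod_(1 <= i < n) (w - z ^+ i).
Proof.
move=> z_prim; have n_gt0 := prim_order_gt0 z_prim.
have XnB1 := factor_Xn_sub_1 z_prim.
rewrite big_ltn // expr0 subrX1 polyC1 in XnB1.
have X1_neq0 : ('X - 1 : {poly F}) != 0 by rewrite -polyC1 polyXsubC_eq0.
have := congr1 (horner^~ w) (mulfI X1_neq0 XnB1).
rewrite horner_sum horner_prod /= => horner_eq.
rewrite (eq_bigr (fun i : 'I_n => ('X^i).[w])); last by move=> i _; rewrite hornerXn.
by rewrite -horner_eq; apply: eq_bigr => i _; rewrite hornerXsubC.
Qed.

End PrimitiveRootFactorization.

Definition expi (t : R) : R[i] := Complex (cos t) (sin t).

Lemma expiD s t : (expi s * expi t)%ring = expi (s + t).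
Proof. by rewrite /expi /= sin_plus cos_plus; congr Complex; rewrite addrC. Qed.

Lemma expiMn t n : (expi t ^+ n)%ring = expi (INR n * t).
Proof.
elim: n => [|n IH]; first by rewrite /expi Rmult_0_l cos_0 sin_0.
by rewrite exprS IH expiD S_INR; congr expi; ring.
Qed.

Lemma normc_expiB s t :
  Normc.normc (expi s - expi t)%ring = Rabs (2 * sin ((s - t) / 2)).
Proof.
rewrite /expi /= RabsE -sqrtr_sqr; congr Num.sqrt.
rewrite -!RpowE -!RminusE -RplusE form2 form4.
have := sin2_cos2 ((s + t) / 2); rewrite /Rsqr; nra.
Qed.

Lemma normc_expi_sub1 t : Normc.normc (expi t - 1)%ring = Rabs (2 * sin (t / 2)).
Proof.
by rewrite -(_ : expi 0 = 1%ring) ?normc_expiB ?Rminus_0_r // /expi cos_0 sin_0.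
Qed.

Lemma expi_eq1 t : expi t = 1%ring <-> sin (t / 2) = 0.
Proof.
split=> [t1 | sin0].
  have : Rabs (2 * sin (t / 2)) = 0 by rewrite -normc_expi_sub1 t1 subrr Normc.normc0.
  by rewrite RabsE => /normr0_eq0 /Rmult_integral [|//]; lra.
apply/eqP; rewrite -subr_eq0; apply/eqP/Normc.eq0_normc.
by rewrite normc_expi_sub1 sin0 Rmult_0_r Rabs_R0.
Qed.

Lemma expi_primitive_root (Q : nat) (p : Z) :
  (0 < Q)%N -> rel_prime p (Z.of_nat Q) ->
  (Q.-primitive_root (expi (2 * PI * IZR p / INR Q)))%ring.
Proof.
move=> Q_gt0 coprime_pQ; apply/andP; split => //; apply/forallP => i; apply/eqP.
have i_range : (0 < i.+1)%coq_nat /\ (i.+1 <= Q)%coq_nat.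
  by split; [lia | apply/ssrnat.leP].
have Q_neq0 : INR Q <> 0 by apply: not_0_INR; lia.
have key := sin_PI_rational_eq0 _ _ _ i_range coprime_pQ.
rewrite (_ : PI * _ = INR i.+1 * (2 * PI * IZR p / INR Q) / 2) in key; last by field.
rewrite -expi_eq1 -expiMn in key.
by rewrite unity_rootE; apply/eqP/eqP => /key.
Qed.

Lemma prod1E N f : prod1 N f = (\prod_(1 <= n < N.+1) f n)%ring.
Proof.
elim: N => [|N IH] /=; first by rewrite big_geq.
by rewrite IH (big_nat_recr N.+1).
Qed.

Lemma P_rational_normc_sum (Q : nat) (p : Z) (y : R) :
  (0 < Q)%N -> rel_prime p (Z.of_nat Q) ->
  P (Q - 1)%coq_nat (IZR p / INR Q) y
  = Normc.normc (\sum_(i < Q) expi (2 * PI * y) ^+ i)%ring.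
Proof.
move=> Q_gt0 coprime_pQ; have /ssrnat.ltP Q_pos := Q_gt0.
have Q_neq0 : INR Q <> 0 by apply: not_0_INR; lia.
(* With z = e^(-2 pi i p/Q) and w = e^(2 pi i y), |w - z^i| = |2 sin (pi (i p/Q + y))|. *)
have coprime_opp : rel_prime (- p) (Z.of_nat Q).
  case: (rel_prime_bezout _ _ coprime_pQ) => u v Huv.
  by apply: bezout_rel_prime; apply: (Bezout_intro _ _ _ (- u) v); rewrite -Huv; ring.
rewrite (sum_expr_prod_sub_roots _ _ _ _ (expi_primitive_root _ _ Q_gt0 coprime_opp)).
rewrite (big_morph _ (@Normc.normcM R) (Normc.normc1 R)) /P prod1E.
rewrite (_ : (Q - 1)%coq_nat.+1 = Q); last by lia.
apply: eq_bigr => i _; rewrite expiMn normc_expiB opp_IZR.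
by congr (Rabs (2 * sin _)); field.
Qed.

Lemma normc_sum_expi_powers (n : nat) (t : R) : sin (t / 2) <> 0 ->
  Normc.normc (\sum_(i < n) expi t ^+ i)%ring
  = Rabs (sin (INR n * t / 2)) / Rabs (sin (t / 2)).
Proof.
move=> sin_neq0; have sin_pos := Rabs_pos_lt _ sin_neq0.
have := congr1 (@Normc.normc R) (subrX1 (expi t) n).
rewrite Normc.normcM expiMn !normc_expi_sub1 !Rabs_mult -RmultE => geom.
have abs2_pos : 0 < Rabs 2 by rewrite Rabs_pos_eq; lra.
apply: (Rmult_eq_reg_l (Rabs 2 * Rabs (sin (t / 2)))); last by nra.
by rewrite -geom; field; lra.
Qed.

Lemma P_rational_sin_ratio (Q : nat) (p : Z) (x : R) :
  (0 < Q)%coq_nat -> rel_prime p (Z.of_nat Q) ->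
  P (Q - 1)%coq_nat (IZR p / INR Q) (x / INR Q) = sin_ratio (INR Q) x.
Proof.
move=> Q_pos coprime_pQ; have /ssrnat.ltP Q_gt0 := Q_pos.
have Q_neq0 : INR Q <> 0 by apply: not_0_INR; lia.
rewrite P_rational_normc_sum // /sin_ratio.
case: excluded_middle_informative => [[m ->] | not_int].
  have -> : expi (2 * PI * IZR m) = 1%ring.
    by apply/expi_eq1; rewrite (_ : _ / 2 = PI * IZR m); [apply/sin_PI_mul_eq0; exists m | field].
  under eq_bigr do rewrite expr1n.
  rewrite sumr_const card_ord -[X in Normc.normc X](rmorph_nat (real_complex R)).
  by rewrite /Normc.normc /= expr0n addr0 sqrtr_sqr ger0_norm ?ler0n // INRE.
have sin_neq0 : sin (PI * (x / INR Q)) <> 0 by move/sin_PI_mul_eq0.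
rewrite normc_sum_expi_powers; last by rewrite (_ : _ / 2 = PI * (x / INR Q)) //; field.
by congr (Rabs (sin _) / Rabs (sin _)); field.
Qed.

End RootsOfUnity.

Lemma irrational_frac_part_neq0 r : irrational r -> frac_part r <> 0.
Proof.
move=> r_irr frac0; apply: (r_irr (Int_part r) 1%Z) => //.
by move: frac0; rewrite /frac_part /Rdiv Rinv_1 Rmult_1_r; lra.
Qed.

Lemma irrational_inv_frac_part r : irrational r -> irrational (/ frac_part r).
Proof.
move=> r_irr m n n_neq0 Hmn.
have frac_neq0 := irrational_frac_part_neq0 _ r_irr.
have m_neq0 : m <> 0%Z.
  by move=> m0; move: Hmn; rewrite m0 /Rdiv Rmult_0_l; apply: Rinv_neq_0_compat.
have frac_nm : frac_part r = IZR n / IZR m.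
  by rewrite -(Rinv_inv (frac_part r)) Hmn; field; split; apply: not_0_IZR.
apply: (r_irr (Int_part r * m + n)%Z m m_neq0).
have r_split : r = IZR (Int_part r) + frac_part r by rewrite /frac_part; ring.
rewrite plus_IZR mult_IZR {1}r_split frac_nm.
by field; apply: not_0_IZR.
Qed.

Lemma cf_rem_irrational a n : irrational a -> irrational (cf_rem a n).
Proof. by move=> a_irr; elim: n => [|n IH] //=; apply: irrational_inv_frac_part. Qed.

Lemma cf_rem_S_gt1 a n : irrational a -> 1 < cf_rem a (S n).
Proof.
move=> a_irr /=.
have frac_neq0 := irrational_frac_part_neq0 _ (cf_rem_irrational _ n a_irr).
have [frac_ge0 frac_lt1] := base_fp (cf_rem a n).
by rewrite -Rinv_1; apply: Rinv_lt_contravar; lra.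
Qed.

Lemma cf_digit_S_ge1 a n : irrational a -> (1 <= cf_digit a (S n))%Z.
Proof.
move=> a_irr; have rem_gt1 := cf_rem_S_gt1 _ n a_irr.
have [int_le int_gt] := base_Int_part (cf_rem a (S n)).
suff : (0 < cf_digit a (S n))%Z by lia.
by apply: lt_IZR; rewrite /cf_digit; lra.
Qed.

Lemma cf_rem_digit a n : cf_rem a n = IZR (cf_digit a n) + / cf_rem a (S n).
Proof. by rewrite /= Rinv_inv /cf_digit /frac_part; ring. Qed.

Definition cf_p_prev (a : R) (n : nat) : Z := fst (snd (cf_pq a n)).
Definition cf_q_prev (a : R) (n : nat) : Z := snd (snd (cf_pq a n)).

Lemma cf_pq_S a n :
  cf_pq a (S n)
  = (((cf_digit a (S n) * cf_p a n + cf_p_prev a n)%Z,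
      (cf_digit a (S n) * cf_q a n + cf_q_prev a n)%Z), (cf_p a n, cf_q a n)).
Proof. by rewrite /= /cf_p /cf_q /cf_p_prev /cf_q_prev; case: (cf_pq a n) => [[p q] [p' q']]. Qed.

Lemma cf_p_S a n : cf_p a (S n) = (cf_digit a (S n) * cf_p a n + cf_p_prev a n)%Z.
Proof. by rewrite {1}/cf_p cf_pq_S. Qed.

Lemma cf_q_S a n : cf_q a (S n) = (cf_digit a (S n) * cf_q a n + cf_q_prev a n)%Z.
Proof. by rewrite {1}/cf_q cf_pq_S. Qed.

Lemma cf_p_prev_S a n : cf_p_prev a (S n) = cf_p a n.
Proof. by rewrite /cf_p_prev cf_pq_S. Qed.

Lemma cf_q_prev_S a n : cf_q_prev a (S n) = cf_q a n.
Proof. by rewrite /cf_q_prev cf_pq_S. Qed.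

Lemma cf_det a n :
  (cf_p a n * cf_q_prev a n - cf_p_prev a n * cf_q a n = - (-1) ^ Z.of_nat n)%Z.
Proof.
elim: n => [|n IH]; first by rewrite /cf_p /cf_q /cf_p_prev /cf_q_prev /=; ring.
rewrite cf_p_S cf_q_S cf_p_prev_S cf_q_prev_S Nat2Z.inj_succ Z.pow_succ_r; last by lia.
by lia.
Qed.

Lemma cf_rel_prime a n : rel_prime (cf_p a n) (cf_q a n).
Proof.
set e := ((-1) ^ Z.of_nat n)%Z.
have e_sqr : (e * e = 1)%Z by rewrite -Z.pow_mul_l; apply: Z.pow_1_l; lia.
apply: bezout_rel_prime.
apply: (Bezout_intro _ _ _ (- e * cf_q_prev a n) (e * cf_p_prev a n)).
have -> : (- e * cf_q_prev a n * cf_p a n + e * cf_p_prev a n * cf_q a n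
          = - e * (cf_p a n * cf_q_prev a n - cf_p_prev a n * cf_q a n))%Z by ring.
by rewrite cf_det Z.mul_opp_opp.
Qed.

Lemma cf_q_bounds a n : irrational a -> (0 <= cf_q_prev a n)%Z /\ (1 <= cf_q a n)%Z.
Proof.
move=> a_irr; elim: n => [|n [q'_ge0 q_ge1]].
  by rewrite /cf_q_prev /cf_q /=; lia.
by rewrite cf_q_S cf_q_prev_S; have := cf_digit_S_ge1 _ n a_irr; nia.
Qed.

Lemma cf_q_prev_ge1 a n : irrational a -> (1 <= n)%nat -> (1 <= cf_q_prev a n)%Z.
Proof.
case: n => [|n] a_irr n_ge1; first by lia.
by rewrite cf_q_prev_S; case: (cf_q_bounds a n a_irr).
Qed.

Lemma cf_complete_quotient a n : irrational a ->
  a * (IZR (cf_q a n) * cf_rem a (S n) + IZR (cf_q_prev a n))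
  = IZR (cf_p a n) * cf_rem a (S n) + IZR (cf_p_prev a n).
Proof.
move=> a_irr; elim: n => [|n IH].
  have a_split : a = IZR (cf_digit a 0) + / cf_rem a 1 := cf_rem_digit a 0.
  have r_gt1 := cf_rem_S_gt1 _ 0 a_irr.
  set r := cf_rem a 1 in a_split r_gt1 *.
  by rewrite {1}a_split /cf_p /cf_q /cf_p_prev /cf_q_prev /=; field; lra.
have r_gt1 := cf_rem_S_gt1 _ (S n) a_irr.
rewrite (cf_rem_digit a (S n)) in IH.
rewrite cf_p_S cf_q_S cf_p_prev_S cf_q_prev_S !plus_IZR !mult_IZR.
transitivity (cf_rem a (S (S n))
  * (a * (IZR (cf_q a n) * (IZR (cf_digit a (S n)) + / cf_rem a (S (S n))) + IZR (cf_q_prev a n)))).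
  by field; lra.
by rewrite IH; field; lra.
Qed.

Lemma cf_q_mul_sub_p a n : irrational a ->
  IZR (cf_q a n) * a - IZR (cf_p a n)
  = (-1) ^ n / (IZR (cf_q a n) * cf_rem a (S n) + IZR (cf_q_prev a n)).
Proof.
move=> a_irr; have [q'_ge0 q_ge1] := cf_q_bounds a n a_irr.
have r_gt1 := cf_rem_S_gt1 _ n a_irr.
have det : IZR (cf_p a n) * IZR (cf_q_prev a n) - IZR (cf_p_prev a n) * IZR (cf_q a n) = - (-1) ^ n.
  by rewrite -!mult_IZR -minus_IZR cf_det opp_IZR pow_IZR.
have aD := cf_complete_quotient a n a_irr.
set D := IZR (cf_q a n) * cf_rem a (S n) + IZR (cf_q_prev a n) in aD *.
have D_pos : 0 < D by have := IZR_le _ _ q_ge1; have := IZR_le _ _ q'_ge0; rewrite /D; nra.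
apply: (Rmult_eq_reg_r D); last by lra.
have -> : (-1) ^ n / D * D = (-1) ^ n by field; lra.
rewrite -[(-1) ^ n]Ropp_involutive -det.
have -> : (IZR (cf_q a n) * a - IZR (cf_p a n)) * D
          = IZR (cf_q a n) * (a * D) - IZR (cf_p a n) * D by ring.
by rewrite aD /D; ring.
Qed.

Lemma dnint_IZR_add_sign (m : Z) k d : 0 < d < / 2 -> dnint (IZR m + (-1) ^ k * d) = d.
Proof.
move=> [d_gt0 d_lt_half]; rewrite /dnint /frac_part /Int_part.
case: (pow_m1_cases k) => ->.
  have -> : up (IZR m + 1 * d) = (m + 1)%Z by symmetry; apply: tech_up; rewrite plus_IZR; lra.
  by rewrite minus_IZR plus_IZR Rmin_left; lra.
have -> : up (IZR m + -1 * d) = m by symmetry; apply: tech_up; lra.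
by rewrite minus_IZR Rmin_right; lra.
Qed.

Lemma cf_q_mul_dnint a k : irrational a -> (1 <= k)%nat ->
  IZR (cf_q a k) * a = IZR (cf_p a k) + (-1) ^ k * dnint (IZR (cf_q a k) * a).
Proof.
move=> a_irr k_ge1; have [_ q_ge1] := cf_q_bounds a k a_irr.
have q'_ge1 := cf_q_prev_ge1 _ _ a_irr k_ge1.
have r_gt1 := cf_rem_S_gt1 _ k a_irr.
set D := IZR (cf_q a k) * cf_rem a (S k) + IZR (cf_q_prev a k).
have D_gt2 : 2 < D by have := IZR_le _ _ q_ge1; have := IZR_le _ _ q'_ge1; rewrite /D; nra.
have qa : IZR (cf_q a k) * a = IZR (cf_p a k) + (-1) ^ k * / D.
  by have := cf_q_mul_sub_p a k a_irr; rewrite -/D /Rdiv; lra.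
rewrite {2}qa dnint_IZR_add_sign //; split; first by apply: Rinv_0_lt_compat; lra.
by apply: Rinv_lt_contravar; lra.
Qed.


Lemma Rabs_2sin_cf_q_alpha a k x : irrational a -> (1 <= k)%nat ->
  Rabs (2 * sin (PI * (IZR (cf_q a k) * a + (-1) ^ k * x / IZR (cf_q a k))))
  = Rabs (2 * sin (PI * (dnint (IZR (cf_q a k) * a) + x / IZR (cf_q a k)))).
Proof.
move=> a_irr k_ge1; rewrite {1}(cf_q_mul_dnint a k a_irr k_ge1) !Rabs_mult.
set d := dnint _; set q := IZR (cf_q a k).
have -> : PI * (IZR (cf_p a k) + (-1) ^ k * d + (-1) ^ k * x / q)
          = IZR (cf_p a k) * PI + (-1) ^ k * (PI * (d + x / q)) by rewrite /Rdiv; ring.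
by rewrite Rabs_sin_add_IZR_PI Rabs_sin_sign.
Qed.

Lemma P_convergent_sin_ratio a k x : irrational a ->
  P (Z.to_nat (cf_q a k) - 1) (IZR (cf_p a k) / IZR (cf_q a k)) ((-1) ^ k * x / IZR (cf_q a k))
  = sin_ratio (IZR (cf_q a k)) x.
Proof.
move=> a_irr; have [_ q_ge1] := cf_q_bounds a k a_irr.
have -> : IZR (cf_q a k) = INR (Z.to_nat (cf_q a k)) by rewrite INR_IZR_INZ Z2Nat.id //; lia.
rewrite RootsOfUnity.P_rational_sin_ratio; last by rewrite Z2Nat.id; [apply: cf_rel_prime | lia].
  by case: (pow_m1_cases k) => ->; rewrite ?Rmult_1_l // -Ropp_mult_distr_l Rmult_1_l sin_ratio_opp.
lia.
Qed.

Lemma V_add_B a k x :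
  V a k x + B a k (Z.to_nat (cf_q a k) - 1) x
  = ln (P (Z.to_nat (cf_q a k) - 1) a ((-1) ^ k * x / IZR (cf_q a k))
        / P (Z.to_nat (cf_q a k) - 1) (IZR (cf_p a k) / IZR (cf_q a k))
            ((-1) ^ k * x / IZR (cf_q a k))).
Proof. by rewrite /V /B /=; ring. Qed.


Theorem corollary1 (a : R) (k : nat) (x : R) :
  irrational a -> (1 <= k)%nat ->
  (* x is such that all terms are defined (no log 0, no pole of cot) *)
  (forall n : nat, (1 <= n <= Z.to_nat (cf_q a k))%nat ->
     sin (PI * (INR n * a + (-1) ^ k * x / IZR (cf_q a k))) <> 0) ->
  (forall n : nat, (1 <= n <= Z.to_nat (cf_q a k) - 1)%nat ->
     sin (PI * (INR n * (-1) ^ k * IZR (cf_p a k) + x) / IZR (cf_q a k)) <> 0) ->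
  ln (P (Z.to_nat (cf_q a k)) a ((-1) ^ k * x / IZR (cf_q a k)))
  = ln (Rabs (2 * sin (PI * (dnint (IZR (cf_q a k) * a) + x / IZR (cf_q a k))))
        * sin_ratio (IZR (cf_q a k)) x)
    + V a k x + B a k (Z.to_nat (cf_q a k) - 1) x.
Proof.
move=> a_irr k_ge1 sin_alpha_neq0 sin_conv_neq0.
have [_ q_ge1] := cf_q_bounds a k a_irr.
rewrite Rplus_assoc V_add_B -(P_convergent_sin_ratio a k x a_irr) -Rabs_2sin_cf_q_alpha //.
set q := cf_q a k in sin_alpha_neq0 sin_conv_neq0 q_ge1 *.
set p := cf_p a k in sin_conv_neq0 *.
set y := (-1) ^ k * x / IZR q in sin_alpha_neq0 *.
set Q := Z.to_nat q in sin_alpha_neq0 sin_conv_neq0 *.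
have Q_S : Q = S (Q - 1) by rewrite /Q; lia.
have INR_Q : INR Q = IZR q by rewrite /Q INR_IZR_INZ Z2Nat.id //; lia.
have last_pos : 0 < Rabs (2 * sin (PI * (IZR q * a + y))).
  by apply: Rabs_2sin_pos; rewrite -INR_Q; apply: sin_alpha_neq0; lia.
have alpha_pos : 0 < P (Q - 1) a y.
  by apply: P_pos => n n_range; apply: sin_alpha_neq0; lia.
have conv_pos : 0 < P (Q - 1) (IZR p / IZR q) y.
  apply: P_pos => n n_range sin0; apply: (sin_conv_neq0 n n_range).
  have -> : PI * (INR n * (-1) ^ k * IZR p + x) / IZR q
            = (-1) ^ k * (PI * (INR n * (IZR p / IZR q) + y)).
    by rewrite /y /Rdiv; case: (pow_m1_cases k) => ->; ring.
  by rewrite sin_sign sin0 Rmult_0_r.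
rewrite {1}Q_S P_S -Q_S INR_Q /Rdiv !ln_mult ?ln_Rinv //; last exact: Rinv_0_lt_compat.
ring.
Qed.
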